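(* Let $X$ be a regular Hausdorff space. If $X$ contains a closed subspace homeomorphic to the Arens space $S_2$, then $\mathcal{K}(X)$ contains a closed subspace homeomorphic to the sequential fan $S_\omega$.
   Context: $\mathcal{K}(X)$ is the set of nonempty compact subsets of $X$ with the Vietoris topology (base: $\langle U_1,\dots,U_k\rangle=\{K: K\subset\bigcup_i U_i,\ K\cap U_j\neq\emptyset\ \forall j\}$, $U_i$ open in $X$). The sequential fan $S_\omega$ is obtained from the topological sum of countably many convergent sequences $T_n\cup\{x_n\}$ ($T_n$ converging to $x_n$), $n\in\omega$, by identifying all $x_n$ to one point. The Arens space $S_2$ is $\{\infty\}\cup\{x_n:n\in\mathbb{N}\}\cup\{x_{n,m}\}$ with each $x_{n,m}$ isolated, basic neighborhoods of $x_n$ being $\{x_n\}\cup\{x_{n,m}: m>k\}$, and basic neighborhoods of $\infty$ being $\{\infty\}\cup\bigcup_{n>k}V_n$ with $V_n$ a neighborhood of $x_n$. *)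

From HB Require Import structures.
From mathcomp Require Import all_boot all_order all_algebra.
From mathcomp Require Import all_classical all_reals all_analysis.
Set Implicit Arguments.
Unset Strict Implicit.
Unset Printing Implicit Defensive.
Local Open Scope classical_set_scope.

(* A "space" is given by a carrier A : set Y together with a family openY of
   open sets (all contained in A).  [closed_embedding openS openY A f] says
   that f : S -> Y maps into A, is injective, continuous, open onto its image
   (with the subspace topology), and that its image is closed in A. *)
Definition closed_embedding (S Y : Type) (openS : set (set S))
    (openY : set (set Y)) (A : set Y) (f : S -> Y) : Prop :=
  [/\ injective f,
      range f `<=` A,
      (forall V, openY V -> openS (f @^-1` V)),
      (forall U, openS U -> exists V, openY V /\ f @` U = V `&` range f) &
      (exists V, openY V /\ A `\` range f = V `&` A)].

(* AInf = infinity, AX n = x_n, AXX n m = x_{n,m}  (indices n, m in nat) *)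
Inductive arens := AInf | AX of nat | AXX of nat & nat.

(* U is open iff it contains a basic neighbourhood of each of its points:
   x_{n,m} isolated; basic nbhds of x_n : {x_n} u {x_{n,m} : m > k};
   basic nbhds of infinity : {inf} u \bigcup_{n > k} V_n, V_n a nbhd of x_n. *)
Definition arens_open (U : set arens) : Prop :=
  (forall n, U (AX n) -> exists k, forall m, (k < m)%N -> U (AXX n m)) /\
  (U AInf -> exists k, forall n, (k < n)%N ->
      U (AX n) /\ exists j, forall m, (j < m)%N -> U (AXX n m)).

(* FTop = the identified limit point, FT n m = m-th term of the n-th sequence *)
Inductive fan := FTop | FT of nat & nat.

(* quotient topology: FT n m isolated; a neighbourhood of FTop must contain
   a tail of each sequence T_n. *)
Definition fan_open (U : set fan) : Prop :=
  U FTop -> forall n, exists k, forall m, (k < m)%N -> U (FT n m).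

Section Hyperspace.
Variable X : topologicalType.

Definition Kset (K : set X) : Prop := K !=set0 /\ compact K.

Definition vietoris_box (k : nat) (U : nat -> set X) : set (set X) :=
  [set K | Kset K /\
     (forall x, K x -> exists2 i, (i < k)%N & U i x) /\
     (forall i, (i < k)%N -> K `&` U i !=set0)].

Definition vietoris_open (W : set (set X)) : Prop :=
  forall K, W K -> Kset K /\
    exists (k : nat) (U : nat -> set X),
      [/\ (forall i, (i < k)%N -> open (U i)), vietoris_box k U K &
          vietoris_box k U `<=` W].
End Hyperspace.

From HB Require Import structures.
From mathcomp Require Import all_boot all_order all_algebra.
From mathcomp Require Import all_classical all_reals all_analysis.
Set Implicit Arguments.
Unset Strict Implicit.
Unset Printing Implicit Defensive.
Local Open Scope classical_set_scope.

(* Let f embed the Arens space S_2 as a closed subspace of X and let L be the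
   image of its non-isolated points: L is compact, being a convergent sequence
   f(x_n) -> f(oo) together with its limit.  Send the vertex of the fan to L and
   the m-th point of the n-th sequence to L u {f(x_{n,m})}.  As x_{n,m} -> x_n,
   which lies in L, every sequence of the fan converges to L in the Vietoris
   topology; conversely a Vietoris neighbourhood <O> of L pulls back to an open
   subset of S_2, which contains a tail of every row: that is exactly a fan
   neighbourhood of the vertex.  A nonempty compact set outside the image either
   leaves f(S_2), or misses a point of L, or contains two distinct isolated points
   f(x_{n,m}); each case is witnessed by a Vietoris box avoiding the image. *)

Lemma compact_cvg_range (T : topologicalType) (u : nat -> T) (l : T) :
  u @ \oo --> l -> compact (l |` range u).
Proof.
move=> ul F PF Fu.
have [|] := pselect (cluster F l); first by exists l; split => //; left.
(* Otherwise some A in F misses a neighbourhood of l, which contains a tail of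
   u, so F contains a finite piece of the range of u. *)
move=> /existsNP[A /existsNP[B /not_implyP[FA /not_implyP[lB AB]]]].
have [k _ uB] := ul _ lB.
have Fk : F (u @` `I_k).
  apply: filterS (filterI FA Fu) => x [Ax [xl|[n _ un]]].
    by case: AB; exists x; split => //; rewrite xl; exact: nbhs_singleton.
  have [nk|kn] := ltnP n k; first by exists n.
  by case: AB; exists x; split => //; rewrite -un; exact: uB.
have [_ [[n _ <-] Fun]] := finite_compact (finite_image _ (finite_II k)) PF Fk.
by exists (u n); split => //; right; exists n.
Qed.

Section VietorisInterior.
Variable X : topologicalType.
Implicit Types (P : set (set X)) (K : set X) (O : set X).

Definition vietoris_interior P : set (set X) :=
  [set K | exists k (U : nat -> set X), [/\ forall i, (i < k)%N -> open (U i),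
     vietoris_box k U K & vietoris_box k U `<=` P]].

Lemma vietoris_interior_sub P : vietoris_interior P `<=` P.
Proof. by move=> K [k [U [_ UK]]]; apply. Qed.

Lemma vietoris_open_interior P : vietoris_open (vietoris_interior P).
Proof.
move=> K [k [U [oU UK UP]]]; split; first exact: UK.1.
by exists k, U; split => // K' UK'; exists k, U.
Qed.

Lemma vietoris_box_setU1 k U K x : vietoris_box k U K ->
  (exists2 i, (i < k)%N & U i x) -> vietoris_box k U (x |` K).
Proof.
move=> [[K0 cK] [cover meet]] Ux; split.
  by split; [exists x; left|apply: compactU => //; exact: compact_set1].
split; first by move=> y [->|/cover].
by move=> i ik; have [y [Ky Uy]] := meet i ik; exists y; split => //; right.
Qed.

Lemma vietoris_interior_subset O P K : open O -> Kset K -> K `<=` O ->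
  (forall K', K' `<=` O -> P K') -> vietoris_interior P K.
Proof.
move=> oO KK KO OP; exists 1%N, (fun=> O); split => //.
  split => //; split; first by move=> x Kx; exists 0%N => //; exact: KO.
  by move=> i _; have [x Kx] := KK.1; exists x; split => //; exact: KO.
by move=> K' [_ [cover _]]; apply: OP => x /cover[].
Qed.

Lemma vietoris_interior_meets2 O1 O2 P K : open O1 -> open O2 -> Kset K ->
  K `&` O1 !=set0 -> K `&` O2 !=set0 ->
  (forall K', K' `&` O1 !=set0 -> K' `&` O2 !=set0 -> P K') ->
  vietoris_interior P K.
Proof.
(* The third open set is the default [setT] of [nth]: it makes the covering
   condition of the box vacuous. *)
move=> oO1 oO2 KK KO1 KO2 OP; exists 3%N, (nth setT [:: O1; O2]); split.
- by case=> [|[|[|i]]] //= _; exact: openT.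
- split => //; split; first by move=> x _; exists 2%N.
  by case=> [|[|[|]]] // _; have [x Kx] := KK.1; exists x.
- by move=> K' [_ [_ meet]]; apply: OP; [exact: meet 0%N _|exact: meet 1%N _].
Qed.

Lemma vietoris_interior_meets O P K : open O -> Kset K -> K `&` O !=set0 ->
  (forall K', K' `&` O !=set0 -> P K') -> vietoris_interior P K.
Proof.
move=> oO KK KO OP; apply: (vietoris_interior_meets2 oO openT KK KO).
  by have [x Kx] := KK.1; exists x.
by move=> K' /OP.
Qed.

Lemma vietoris_open_image (S : Type) (g : S -> set X) (U : set S) :
  (forall y, U y -> vietoris_interior [set K | forall y', g y' = K -> U y'] (g y)) ->
  exists V, vietoris_open V /\ g @` U = V `&` range g.
Proof.
move=> gU; exists (vietoris_interior [set K | forall y', g y' = K -> U y']).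
split; first exact: vietoris_open_interior.
apply/seteqP; split; first by move=> _ [y Uy <-]; split; [exact: gU|exists y].
by move=> K [/vietoris_interior_sub UK [y _ gyK]]; exists y => //; exact: UK.
Qed.

Lemma vietoris_closed_range (S : Type) (g : S -> set X) :
  (forall K, Kset K -> ~ range g K -> vietoris_interior (~` range g) K) ->
  exists V, vietoris_open V /\ @Kset X `\` range g = V `&` @Kset X.
Proof.
move=> gK; exists (vietoris_interior (~` range g)).
split; first exact: vietoris_open_interior.
apply/seteqP; split; first by move=> K [KK nK]; split => //; exact: gK.
by move=> K [/vietoris_interior_sub nK KK].
Qed.

End VietorisInterior.

Section ArensInHyperspace.
Variables (X : topologicalType) (f : arens -> X).
Hypothesis f_inj : injective f.
Hypothesis f_cont : forall V : set X, open V -> arens_open (f @^-1` V).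
Hypothesis f_open : forall Q, arens_open Q ->
  exists V : set X, open V /\ f @` Q = V `&` range f.
Hypothesis f_closed : exists V : set X, open V /\ setT `\` range f = V `&` setT.

Lemma open_trace Q : arens_open Q ->
  exists2 V : set X, open V & forall c, V (f c) <-> Q c.
Proof.
move=> /f_open[V [oV fQ]]; exists V => // c; split => [Vfc|Qc].
  have : (V `&` range f) (f c) by split => //; exists c.
  by rewrite -fQ => -[d Qd /f_inj <-].
have : (f @` Q) (f c) by exists c.
by rewrite fQ => -[].
Qed.

Lemma open_setC_range : exists2 V : set X, open V & forall x, V x <-> ~ range f x.
Proof.
have [V [oV E]] := f_closed; exists V => // x; split => [Vx|nfx].
  have : (V `&` setT) x by [].
  by rewrite -E => -[].
have : (setT `\` range f) x by [].
by rewrite E => -[].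
Qed.

Lemma arens_open_isolated n m : arens_open [set AXX n m].
Proof. by split. Qed.

Lemma arens_open_setC1 c : arens_open [set~ c].
Proof.
case: c => [|k|n0 m0]; split.
- by move=> n _; exists 0%N.
- by move=> /(_ erefl).
- by move=> n _; exists 0%N.
- by move=> _; exists k => n kn; split; [case=> nk; rewrite nk ltnn in kn|exists 0%N].
- by move=> n _; exists m0 => m m0m [_ mm0]; rewrite mm0 ltnn in m0m.
- move=> _; exists 0%N => n _; split => //.
  by exists m0 => m m0m [_ mm0]; rewrite mm0 ltnn in m0m.
Qed.

Lemma arens_open_tails (k : nat -> nat) :
  arens_open [set c | if c is AXX n m then (k n < m)%N else True].
Proof. by split => [n _|_]; [exists (k n)|exists 0%N => n _; split => //; exists (k n)]. Qed.

Definition nonisolated (c : arens) : Prop := if c is AXX _ _ then False else True.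

Definition spine : set X := f @` nonisolated.

Definition fan_image (y : fan) : set X :=
  if y is FT n m then f (AXX n m) |` spine else spine.

Lemma spine_fan_image y : spine `<=` fan_image y.
Proof. by case: y => [|n m] x //; right. Qed.

Lemma fan_image_range y : fan_image y `<=` range f.
Proof.
have spine_range : spine `<=` range f by move=> _ [c _ <-]; exists c.
case: y => [|n m] x; first exact: spine_range.
by case=> [->|/spine_range //]; exists (AXX n m).
Qed.

Lemma fan_image_isolated y n m : fan_image y (f (AXX n m)) -> y = FT n m.
Proof.
have notspine : ~ spine (f (AXX n m)) by case=> c + /f_inj cE; rewrite cE.
case: y => [|n' m'] /=; first by move/notspine.
by case=> [/f_inj [-> ->]|/notspine].
Qed.

Lemma fan_image_meets_isolated y n m (O : set X) :
  (forall c, O (f c) <-> c = AXX n m) -> fan_image y `&` O !=set0 -> y = FT n m.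
Proof.
move=> Of [x [yx Ox]]; have [c _ fc] := fan_image_range yx.
by move: yx Ox; rewrite -fc => yc /Of cE; rewrite cE in yc; exact: fan_image_isolated.
Qed.

Lemma cvg_spine : (fun n => f (AX n)) @ \oo --> f AInf.
Proof.
move=> B; rewrite nbhsE => -[V [oV Vf] VB].
have [_ /(_ Vf) [k kV]] := f_cont oV.
by exists k.+1 => // n /= kn; apply: VB; exact: (kV n kn).1.
Qed.

Lemma spine_compact : compact spine.
Proof.
have -> : spine = f AInf |` range (fun n => f (AX n)).
  apply/seteqP; split => [_ [[|n|//] _ <-]|_ [->|[n _ <-]]].
  - by left.
  - by right; exists n.
  - by exists AInf.
  - by exists (AX n).
exact: compact_cvg_range cvg_spine.
Qed.

Lemma Kset_fan_image y : Kset (fan_image y).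
Proof.
split; first by exists (f AInf); apply: spine_fan_image; exists AInf.
case: y => [|n m]; first exact: spine_compact.
by apply: compactU; [exact: compact_set1|exact: spine_compact].
Qed.

Lemma fan_image_inj : injective fan_image.
Proof.
have FT_eq n m y : fan_image (FT n m) = fan_image y -> FT n m = y.
  by move=> E; apply/esym/fan_image_isolated; rewrite -E; left.
case=> [|n m] y E; last exact: FT_eq.
by case: y E => // n m /esym/FT_eq.
Qed.

Lemma fan_image_cont W : vietoris_open W -> fan_open (fan_image @^-1` W).
Proof.
move=> oW /oW[_ [k [U [oU Ubox UW]]]] n.
have [i ik Ui] : exists2 i, (i < k)%N & U i (f (AX n)).
  by apply: Ubox.2.1; exists (AX n).
have [j jU] := (f_cont (oU i ik)).1 n Ui.
exists j => m jm; apply: UW; apply: vietoris_box_setU1 Ubox _.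
by exists i => //; exact: jU.
Qed.

Lemma fan_image_open_top U : fan_open U -> U FTop ->
  vietoris_interior [set K | forall y, fan_image y = K -> U y] (fan_image FTop).
Proof.
move=> oU Utop; have [k kU] := choice (oU Utop).
have [V oV Vf] := open_trace (arens_open_tails k).
apply: (vietoris_interior_subset oV (Kset_fan_image FTop)).
  by move=> _ [c nc <-]; apply/Vf; case: c nc.
move=> K KV [//|n m] yK; apply: kU; apply/(Vf (AXX n m))/KV.
by rewrite -yK; left.
Qed.

Lemma fan_image_open_isolated U n m : U (FT n m) ->
  vietoris_interior [set K | forall y, fan_image y = K -> U y] (fan_image (FT n m)).
Proof.
move=> Unm; have [V oV Vf] := open_trace (arens_open_isolated n m).
apply: (vietoris_interior_meets oV (Kset_fan_image _)).
  by exists (f (AXX n m)); split; [left|exact/Vf].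
by move=> K KV y yK; rewrite -yK in KV; rewrite (fan_image_meets_isolated Vf KV).
Qed.

Lemma fan_image_closed_off_range K : Kset K -> ~ K `<=` range f ->
  vietoris_interior (~` range fan_image) K.
Proof.
move=> KK /nonsubset KnR; have [V oV Vf] := open_setC_range.
apply: (vietoris_interior_meets oV KK).
  by case: KnR => x [Kx nx]; exists x; split => //; exact/Vf.
move=> K' [x [K'x Vx]] [y _ yK]; apply: (proj1 (Vf x) Vx).
by apply: (@fan_image_range y); rewrite yK.
Qed.

Lemma fan_image_closed_missing_spine K : Kset K -> K `<=` range f ->
  ~ spine `<=` K -> vietoris_interior (~` range fan_image) K.
Proof.
move=> KK Kf /nonsubset[_ [[c nc <-] nKc]].
have [V oV Vf] := open_trace (arens_open_setC1 c).
apply: (vietoris_interior_subset oV KK).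
  move=> x Kx; have [d _ dx] := Kf x Kx; rewrite -dx in Kx *.
  by apply/Vf => dc; rewrite dc in Kx.
move=> K' K'V [y _ yK]; apply: (proj1 (Vf c) _ erefl); apply: K'V.
by rewrite -yK; apply: spine_fan_image; exists c.
Qed.

Lemma fan_image_closed_two_isolated K n m n' m' : Kset K ->
  K (f (AXX n m)) -> K (f (AXX n' m')) -> FT n m <> FT n' m' ->
  vietoris_interior (~` range fan_image) K.
Proof.
move=> KK Knm Knm' nm.
have [V oV Vf] := open_trace (arens_open_isolated n m).
have [V' oV' V'f] := open_trace (arens_open_isolated n' m').
apply: (vietoris_interior_meets2 oV oV' KK).
- by exists (f (AXX n m)); split => //; exact/Vf.
- by exists (f (AXX n' m')); split => //; exact/V'f.
move=> K' K'V K'V' [y _ yK]; rewrite -yK in K'V K'V'; apply: nm.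
by rewrite -(fan_image_meets_isolated Vf K'V) (fan_image_meets_isolated V'f K'V').
Qed.

Lemma fan_image_of_isolated K y : K `<=` range f -> fan_image y `<=` K ->
  (forall n m, K (f (AXX n m)) -> y = FT n m) -> K = fan_image y.
Proof.
move=> Kf yK Ky; apply/seteqP; split => // x Kx.
have [c _ cx] := Kf x Kx; subst x.
case: c Kx => [|k|n m] Kx.
- by apply: spine_fan_image; exists AInf.
- by apply: spine_fan_image; exists (AX k).
- by rewrite (Ky n m Kx); left.
Qed.

Lemma fan_image_closed K : Kset K -> ~ range fan_image K ->
  vietoris_interior (~` range fan_image) K.
Proof.
move=> KK nK.
have [Kf|] := pselect (K `<=` range f); last exact: fan_image_closed_off_range.
have [sK|] := pselect (spine `<=` K); last exact: fan_image_closed_missing_spine.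
have [[n [m Knm]]|none] := pselect (exists n m, K (f (AXX n m))); last first.
  case: nK; exists FTop => //; apply/esym/fan_image_of_isolated => // n m Knm.
  by case: none; exists n, m.
have [[n' [m' [Knm' nm]]]|one] :=
  pselect (exists n' m', K (f (AXX n' m')) /\ FT n m <> FT n' m').
  exact: fan_image_closed_two_isolated Knm Knm' nm.
case: nK; exists (FT n m) => //; apply/esym/fan_image_of_isolated => //.
  by move=> x [->|/sK].
by move=> n' m' Knm'; apply: contrapT => nm; apply: one; exists n', m'.
Qed.

End ArensInHyperspace.

Theorem proposition3p10 (X : topologicalType) :
  hausdorff_space X -> @regular_space X ->
  (exists f : arens -> X, closed_embedding arens_open (@open X) setT f) ->
  exists g : fan -> set X,
    closed_embedding fan_open (@vietoris_open X) (@Kset X) g.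
Proof.
move=> _ _ [f [f_inj _ f_cont f_open f_closed]].
exists (fan_image f); split.
- exact: fan_image_inj.
- by move=> _ [y _ <-]; exact: Kset_fan_image.
- exact: fan_image_cont.
- move=> U oU; apply: vietoris_open_image => -[|n m] Uy.
    exact: fan_image_open_top.
  exact: fan_image_open_isolated.
- exact/vietoris_closed_range/fan_image_closed.
Qed.
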